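(* Let $S_1,S_2\subseteq\Omega=\{0,\dots,D-1\}$ be nonempty sets with resemblance $R=\frac{|S_1\cap S_2|}{|S_1\cup S_2|}$, and fix integers $b\ge1$, $k\ge1$, $m\ge1$. Apply $k$ independent uniformly random permutations $\pi_1,\dots,\pi_k$ of $\Omega$; for each $j$ record the lowest $b$ bits of $\min\pi_j(S_1)$ and of $\min\pi_j(S_2)$, and let $T$ be the number of $j\in\{1,\dots,k\}$ for which these $b$-bit values coincide, so that $T$ is Binomial$(k,P_b)$ where $P_b$ is the probability that the lowest $b$ bits of $\min\pi(S_1)$ and $\min\pi(S_2)$ agree. Assume $P_b=C_{1,b}+(1-C_{2,b})R$ with $C_{2,b}\ne1$, where $r_1=|S_1|/D$, $r_2=|S_2|/D$, $A_{l,b}=\frac{r_l(1-r_l)^{2^b-1}}{1-(1-r_l)^{2^b}}$ ($l=1,2$), $C_{1,b}=A_{1,b}\frac{r_2}{r_1+r_2}+A_{2,b}\frac{r_1}{r_1+r_2}$, $C_{2,b}=A_{1,b}\frac{r_1}{r_1+r_2}+A_{2,b}\frac{r_2}{r_1+r_2}$. Expand the $b$-bit values of $S_1$ (resp. $S_2$) into a binary vector $x_1$ (resp. $x_2$) of length $2^bk$ consisting of $k$ consecutive blocks of length $2^b$, where block $j$ is the indicator vector of the $b$-bit value obtained from $\pi_j$; thus each $x_l$ has exactly $k$ ones and $\langle x_1,x_2\rangle=T$. Apply to $x_1,x_2$ the VW hashing with $m$ buckets and $s=1$, independently of the permutations: with i.i.d. uniform $h(i)\in\{1,\dots,m\}$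 and i.i.d. $r_i$ uniform on $\{-1,1\}$, set $g_{l,q}=\sum_i x_{l,i}r_i1\{h(i)=q\}$, $\hat T=\sum_{q=1}^m g_{1,q}g_{2,q}$, and $$\hat R_{b,vw}=\frac{\hat T/k-C_{1,b}}{1-C_{2,b}}.$$ Then $E(\hat R_{b,vw})=R$ and $$\mathrm{Var}(\hat R_{b,vw})=\frac1k\frac{P_b(1-P_b)}{[1-C_{2,b}]^2}+\frac1m\frac{1}{[1-C_{2,b}]^2}\left(1+P_b^2-\frac{P_b(1+P_b)}{k}\right).$$
   Context: The first term $\frac1k\frac{P_b(1-P_b)}{[1-C_{2,b}]^2}$ is the variance of the $b$-bit minwise hashing estimator $\hat R_b=\frac{T/k-C_{1,b}}{1-C_{2,b}}$. The relation $P_b=C_{1,b}+(1-C_{2,b})R$ is the (large-$D$) expression for the $b$-bit collision probability used throughout the paper. *)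

From mathcomp Require Import all_boot all_order all_algebra all_fingroup.
Set Implicit Arguments. Unset Strict Implicit. Unset Printing Implicit Defensive.
Import Order.TTheory GRing.Theory Num.Theory.
Local Open Scope ring_scope.

Section Defs.
Variable R : realFieldType.

Definition Eu (T : finType) (X : T -> R) : R := (\sum_(w : T) X w) / #|T|%:R.
Definition Varu (T : finType) (X : T -> R) : R := Eu (fun w => (X w - Eu X) ^+ 2).

Definition minperm (D : nat) (pi : {perm 'I_D}) (S : {set 'I_D}) : nat :=
  \big[minn/D]_(i in S) val (pi i).

Definition lowbits (b v : nat) : nat := (v %% 2 ^ b)%N.

Definition Pb (D b : nat) (S1 S2 : {set 'I_D}) : R :=
  Eu (fun pi : {perm 'I_D} =>
        (lowbits b (minperm pi S1) == lowbits b (minperm pi S2))%:R).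

Definition resemblance (D : nat) (S1 S2 : {set 'I_D}) : R :=
  #|S1 :&: S2|%:R / #|S1 :|: S2|%:R.

Definition Alb (b : nat) (r : R) : R :=
  r * (1 - r) ^+ (2 ^ b - 1) / (1 - (1 - r) ^+ (2 ^ b)).

Definition C1b (b : nat) (r1 r2 : R) : R :=
  Alb b r1 * (r2 / (r1 + r2)) + Alb b r2 * (r1 / (r1 + r2)).
Definition C2b (b : nat) (r1 r2 : R) : R :=
  Alb b r1 * (r1 / (r1 + r2)) + Alb b r2 * (r2 / (r1 + r2)).

(* sample space: k permutations, hash h : coordinates -> buckets, signs r *)
Definition Omega (D b k m : nat) : finType :=
  ({ffun 'I_k -> {perm 'I_D}} * {ffun 'I_(2 ^ b * k) -> 'I_m}
     * {ffun 'I_(2 ^ b * k) -> bool})%type.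

Definition xvec (D b k : nat) (pis : {ffun 'I_k -> {perm 'I_D}}) (S : {set 'I_D})
  (i : 'I_(2 ^ b * k)) : R :=
  [exists j : 'I_k, nat_of_ord i == (j * 2 ^ b + lowbits b (minperm (pis j) S))%N]%:R.

Definition sgn (x : bool) : R := (-1) ^+ x.

Definition gvw (D b k m : nat) (w : Omega D b k m) (S : {set 'I_D}) (q : 'I_m) : R :=
  \sum_(i < 2 ^ b * k) xvec w.1.1 S i * sgn (w.2 i) * (w.1.2 i == q)%:R.

Definition That (D b k m : nat) (S1 S2 : {set 'I_D}) (w : Omega D b k m) : R :=
  \sum_(q < m) gvw w S1 q * gvw w S2 q.

Definition Rhat_vw (D b k m : nat) (S1 S2 : {set 'I_D}) (w : Omega D b k m) : R :=
  let r1 := #|S1|%:R / D%:R in let r2 := #|S2|%:R / D%:R in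
  (That S1 S2 w / k%:R - C1b b r1 r2) / (1 - C2b b r1 r2).

End Defs.

From mathcomp Require Import all_boot all_order all_algebra all_fingroup.
From mathcomp Require Import ring lra zify.
Set Implicit Arguments. Unset Strict Implicit. Unset Printing Implicit Defensive.
Import Order.TTheory GRing.Theory Num.Theory.
Local Open Scope ring_scope.

(* Given the permutations, x1 and x2 are fixed 0/1 vectors with k ones each
   and <x1, x2> = T, a sum of k independent indicators of mean P_b.  VW hashing
   is unbiased for the inner product, E[T^ | T] = T; and since E[s_i s_j s_k s_l]
   vanishes unless the indices pair up while P(h i = h j) = 1/m for i <> j,
   E[T^^2 | T] = T^2 + (|x1| |x2| + T^2 - 2 T) / m = T^2 + (k^2 + T^2 - 2 T) / m.
   Averaging over the binomial T gives the first two moments of T^, and R^_{b,vw}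
   is an affine function of T^. *)

Section UniformExpectation.
Variable R : realFieldType.
Implicit Types T I J : finType.

Lemma eq_Eu T (f g : T -> R) : f =1 g -> Eu f = Eu g.
Proof. by move=> fg; rewrite /Eu (eq_bigr _ (fun w _ => fg w)). Qed.

Lemma eq_Varu T (f g : T -> R) : f =1 g -> Varu f = Varu g.
Proof. by move=> fg; rewrite /Varu (eq_Eu fg); apply: eq_Eu => w; rewrite fg. Qed.

Lemma Eu_add T (f g : T -> R) : Eu (fun w => f w + g w) = Eu f + Eu g.
Proof. by rewrite /Eu big_split mulrDl. Qed.

Lemma Eu_scale T (c : R) (f : T -> R) : Eu (fun w => c * f w) = c * Eu f.
Proof. by rewrite /Eu -mulr_sumr mulrA. Qed.

Lemma Eu_sum T I (f : I -> T -> R) : Eu (fun w => \sum_i f i w) = \sum_i Eu (f i).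
Proof. by rewrite /Eu exchange_big /= mulr_suml. Qed.

Lemma Eu_cst T (c : R) : (0 < #|T|)%N -> Eu (fun _ : T => c) = c.
Proof.
move=> T_gt0; rewrite /Eu sumr_const -[c *+ _]mulr_natr mulfK //.
by rewrite pnatr_eq0 -lt0n.
Qed.

Lemma Eu_affine T (a c : R) (f : T -> R) : (0 < #|T|)%N ->
  Eu (fun w => a * f w + c) = a * Eu f + c.
Proof. by move=> T_gt0; rewrite Eu_add Eu_scale Eu_cst. Qed.

Lemma Varu_affine T (a c : R) (f : T -> R) : (0 < #|T|)%N ->
  Varu (fun w => a * f w + c) = a ^+ 2 * (Eu (fun w => f w ^+ 2) - Eu f ^+ 2).
Proof.
move=> T_gt0; rewrite /Varu Eu_affine //.
rewrite (@eq_Eu _ _ (fun w => a ^+ 2 * f w ^+ 2 + (- (2 * a ^+ 2 * Eu f)) * f w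
   + a ^+ 2 * Eu f ^+ 2)); last by move=> w; ring.
by rewrite !Eu_add Eu_cst // !Eu_scale; ring.
Qed.

Lemma Eu_pair I J (F : I * J -> R) : Eu F = Eu (fun i => Eu (fun j => F (i, j))).
Proof.
rewrite /Eu card_prod natrM invfM (eq_bigr (fun w => F (w.1, w.2))); last by case.
rewrite -(pair_bigA _ (fun i j => F (i, j))) /= mulr_suml [RHS]mulr_suml.
by apply: eq_bigr => i _; rewrite mulrAC mulrA.
Qed.

Lemma Eu_ffun_prod I J (F : I -> J -> R) :
  Eu (fun h : {ffun I -> J} => \prod_i F i (h i)) = \prod_i Eu (F i).
Proof.
by rewrite /Eu -bigA_distr_bigA card_ffun natrX big_split /= prodr_const exprVn.
Qed.

Lemma Eu_ffun_coord I J (i : I) (f : J -> R) : (0 < #|J|)%N ->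
  Eu (fun h : {ffun I -> J} => f (h i)) = Eu f.
Proof.
move=> J_gt0; pose F t := if t == i then f else fun _ => 1.
have Fi (h : {ffun I -> J}) : \prod_t F t (h t) = f (h i).
  by rewrite (bigD1 i) //= /F eqxx big1 ?mulr1 // => t /negbTE ->.
rewrite -(eq_Eu Fi) Eu_ffun_prod (bigD1 i) //= /F eqxx big1 ?mulr1 //.
by move=> t /negbTE ->; apply: Eu_cst.
Qed.

Lemma Eu_ffun_coord2 I J (i i' : I) (f g : J -> R) : (0 < #|J|)%N -> i != i' ->
  Eu (fun h : {ffun I -> J} => f (h i) * g (h i')) = Eu f * Eu g.
Proof.
move=> J_gt0 ii'; have i'i : i' != i by rewrite eq_sym.
pose F t := if t == i then f else if t == i' then g else fun _ => 1.
have Fii' (h : {ffun I -> J}) : \prod_t F t (h t) = f (h i) * g (h i').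
  rewrite (bigD1 i) //= (bigD1 i') //= /F eqxx (negbTE i'i) eqxx mulrA.
  by rewrite big1 ?mulr1 // => t /andP[/negbTE -> /negbTE ->].
rewrite -(eq_Eu Fii') Eu_ffun_prod (bigD1 i) //= (bigD1 i') //= /F eqxx.
rewrite (negbTE i'i) eqxx mulrA big1 ?mulr1 //.
by move=> t /andP[/negbTE -> /negbTE ->]; apply: Eu_cst.
Qed.

Lemma sumr_delta I (i : I) (F : I -> R) : \sum_j (i == j)%:R * F j = F i.
Proof.
rewrite (bigD1 i) //= eqxx mul1r big1 ?addr0 // => j ij.
by rewrite eq_sym (negbTE ij) mul0r.
Qed.

Lemma sumr_offdiag I (f : I -> I -> R) :
  \sum_i \sum_j (i != j)%:R * f i j = \sum_i \sum_j f i j - \sum_i f i i.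
Proof.
rewrite -sumrB; apply: eq_bigr => i _.
rewrite -(sumr_delta i (f i)) -sumrB; apply: eq_bigr => j _.
by case: (i == j) => /=; ring.
Qed.

End UniformExpectation.

Section RandomSigns.
Variables (R : realFieldType) (I : finType).
Implicit Types (s : {ffun I -> bool}).

Lemma sgn_negb x : sgn R (~~ x) = - sgn R x.
Proof. by case: x; rewrite /sgn ?expr0 ?expr1 ?opprK. Qed.

Lemma sgn_mulss x : sgn R x * sgn R x = 1.
Proof. by case: x; rewrite /sgn ?expr0 ?expr1 ?mulr1 ?mulrNN ?mulr1. Qed.

Lemma card_signs_gt0 : (0 < #|{ffun I -> bool}|)%N.
Proof. by apply/card_gt0P; exists [ffun=> false]. Qed.

Definition flip_at (t : I) s : {ffun I -> bool} := [ffun u => (u == t) (+) s u].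

Lemma flip_atK t : involutive (flip_at t).
Proof. by move=> s; apply/ffunP => u; rewrite !ffunE addbA addbb. Qed.

Lemma sgn_flip_at t s u :
  sgn R (flip_at t s u) = if u == t then - sgn R (s u) else sgn R (s u).
Proof. by rewrite ffunE; case: (u == t); rewrite ?sgn_negb. Qed.

(* Flipping one sign is a measure-preserving involution. *)
Lemma Eu_odd_sign t (F : {ffun I -> bool} -> R) :
  (forall s, F (flip_at t s) = - F s) -> Eu F = 0.
Proof.
move=> Fodd; suff: \sum_s F s = 0 by rewrite /Eu => ->; rewrite mul0r.
have e : \sum_s F s = \sum_s F (flip_at t s) := reindex_inj (can_inj (flip_atK t)).
by move: e; rewrite (eq_bigr _ (fun s _ => Fodd s)) sumrN; lra.
Qed.

Lemma Eu_sgn2 i j : Eu (fun s => sgn R (s i) * sgn R (s j)) = (i == j)%:R.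
Proof.
have [<-|ij] := eqVneq i j.
  by rewrite (@eq_Eu _ _ _ (fun=> 1)) ?Eu_cst ?card_signs_gt0 // => s; rewrite sgn_mulss.
apply: (@Eu_odd_sign i) => s.
by rewrite !sgn_flip_at eqxx eq_sym (negbTE ij) mulNr.
Qed.

Lemma Eu_sgn4 i j k l :
  Eu (fun s => sgn R (s i) * sgn R (s j) * (sgn R (s k) * sgn R (s l))) =
  (i == j)%:R * (k == l)%:R
  + (i != j)%:R * ((i == k)%:R * (j == l)%:R + (i == l)%:R * (j == k)%:R).
Proof.
have [<-|ij] := eqVneq i j.
  rewrite mul1r mul0r addr0 -(Eu_sgn2 k l); apply: eq_Eu => s.
  by rewrite sgn_mulss mul1r.
have ji : j != i by rewrite eq_sym.
have one (F : {ffun I -> bool} -> R) : F =1 (fun=> 1) -> Eu F = 1.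
  by move=> /eq_Eu ->; rewrite Eu_cst ?card_signs_gt0.
have [<-|ik] := eqVneq i k.
  have [<-|jl] := eqVneq j l.
    transitivity (1 : R); last by rewrite ?(negbTE ij) ?(negbTE ji) /=; ring.
    by apply: one => s; rewrite mulrACA !sgn_mulss mulr1.
  transitivity (0 : R); last by rewrite ?(negbTE ji) ?(negbTE jl) /=; ring.
  apply: (@Eu_odd_sign j) => s.
  by rewrite !sgn_flip_at eqxx (negbTE ij) eq_sym (negbTE jl); ring.
have ki : k != i by rewrite eq_sym.
have [<-|il] := eqVneq i l.
  have [<-|jk] := eqVneq j k.
    transitivity (1 : R); last by rewrite ?(negbTE ki) /=; ring.
    by apply: one => s; rewrite [sgn R (s j) * _]mulrC mulrACA !sgn_mulss mulr1.
  transitivity (0 : R); last by rewrite ?(negbTE ki) /=; ring.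
  apply: (@Eu_odd_sign j) => s.
  by rewrite !sgn_flip_at eqxx (negbTE ij) eq_sym (negbTE jk); ring.
transitivity (0 : R); last by rewrite ?(negbTE ki) ?(eq_sym l) ?(negbTE il) /=; ring.
apply: (@Eu_odd_sign i) => s.
by rewrite !sgn_flip_at eqxx (negbTE ji) (negbTE ki) eq_sym (negbTE il); ring.
Qed.

Lemma Eu_sgn_form (u : I -> I -> R) :
  Eu (fun s => \sum_i \sum_j u i j * (sgn R (s i) * sgn R (s j))) = \sum_i u i i.
Proof.
rewrite Eu_sum; apply: eq_bigr => i _; rewrite Eu_sum -[RHS](sumr_delta i).
by apply: eq_bigr => j _; rewrite Eu_scale Eu_sgn2 mulrC.
Qed.

Lemma Eu_sgn_form_sq (u : I -> I -> R) :
  Eu (fun s => (\sum_i \sum_j u i j * (sgn R (s i) * sgn R (s j))) ^+ 2) =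
  (\sum_i u i i) ^+ 2 + \sum_i \sum_j (i != j)%:R * (u i j * u i j + u i j * u j i).
Proof.
pose E4 (i j k l : I) : R := (i == j)%:R * (k == l)%:R
  + (i != j)%:R * ((i == k)%:R * (j == l)%:R + (i == l)%:R * (j == k)%:R).
have inner_l i j k : \sum_l u k l * E4 i j k l =
    (i == j)%:R * u k k + (i != j)%:R * ((i == k)%:R * u k j + (j == k)%:R * u k i).
  rewrite (eq_bigr (fun l => (i == j)%:R * ((k == l)%:R * u k l)
    + ((i != j)%:R * (i == k)%:R) * ((j == l)%:R * u k l)
    + ((i != j)%:R * (j == k)%:R) * ((i == l)%:R * u k l))); last first.
    by move=> l _; rewrite /E4; ring.
  by rewrite !big_split -!mulr_sumr !sumr_delta /=; ring.
have inner i j : \sum_k \sum_l u k l * E4 i j k l =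
    (i == j)%:R * \sum_k u k k + (i != j)%:R * (u i j + u j i).
  rewrite (eq_bigr _ (fun k _ => inner_l i j k)) big_split -mulr_sumr /=.
  by rewrite -mulr_sumr big_split /= !sumr_delta.
rewrite (@eq_Eu _ _ _ (fun s => \sum_i \sum_j \sum_k \sum_l
    u i j * u k l * (sgn R (s i) * sgn R (s j) * (sgn R (s k) * sgn R (s l))))); last first.
  move=> s; rewrite expr2 mulr_suml; apply: eq_bigr => i _.
  rewrite mulr_suml; apply: eq_bigr => j _; rewrite mulr_sumr; apply: eq_bigr => k _.
  by rewrite mulr_sumr; apply: eq_bigr => l _; ring.
rewrite Eu_sum expr2 mulr_suml -big_split; apply: eq_bigr => i _ /=.
rewrite Eu_sum -[u i i * _](sumr_delta i (fun j => u i j * _)) -big_split.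
apply: eq_bigr => j _ /=; rewrite Eu_sum.
rewrite (eq_bigr (fun k => u i j * \sum_l u k l * E4 i j k l)); last first.
  by move=> k _; rewrite Eu_sum mulr_sumr; apply: eq_bigr => l _; rewrite Eu_scale Eu_sgn4 mulrA.
by rewrite -mulr_sumr inner; ring.
Qed.

End RandomSigns.

Section VWHashing.
Variables (R : realFieldType) (I : finType) (m : nat).
Hypothesis m_gt0 : (0 < m)%N.
Implicit Types (a b : I -> R) (h : {ffun I -> 'I_m}) (s : {ffun I -> bool}).

Definition vw_inner a b h s : R :=
  \sum_(q < m) (\sum_i a i * sgn R (s i) * (h i == q)%:R)
               * (\sum_i b i * sgn R (s i) * (h i == q)%:R).

Lemma vw_inner_sgn_form a b h s : vw_inner a b h s =
  \sum_i \sum_j (a i * b j * (h i == h j)%:R) * (sgn R (s i) * sgn R (s j)).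
Proof.
rewrite /vw_inner (eq_bigr (fun q => \sum_i \sum_j
   (a i * sgn R (s i) * (h i == q)%:R) * (b j * sgn R (s j) * (h j == q)%:R))); last first.
  by move=> q _; rewrite mulr_suml; apply: eq_bigr => i _; rewrite mulr_sumr.
rewrite exchange_big; apply: eq_bigr => i _ /=.
rewrite exchange_big; apply: eq_bigr => j _ /=.
rewrite (bigD1 (h i)) //= big1 ?addr0; first by rewrite eqxx (eq_sym (h j)) mulr1; ring.
by move=> q qhi; rewrite eq_sym (negbTE qhi) mulr0 mul0r.
Qed.

Lemma card_hash_gt0 : (0 < #|{ffun I -> 'I_m}|)%N.
Proof. by apply/card_gt0P; exists [ffun=> Ordinal m_gt0]. Qed.

Lemma Eu_hash_collision (i j : I) : i != j ->
  Eu (fun h => (h i == h j)%:R) = m%:R^-1 :> R.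
Proof.
move=> ij; have Im_gt0 : (0 < #|'I_m|)%N by rewrite card_ord.
have Eu_bucket (q : 'I_m) : Eu (fun y : 'I_m => (y == q)%:R) = m%:R^-1 :> R.
  rewrite /Eu card_ord (eq_bigr (fun y => (q == y)%:R * 1)) ?sumr_delta ?mul1r //.
  by move=> y _; rewrite mulr1 eq_sym.
rewrite (@eq_Eu _ _ _ (fun h => \sum_q (h i == q)%:R * (h j == q)%:R)); last first.
  move=> h; rewrite (bigD1 (h i)) //= eqxx mul1r big1 ?addr0 ?(eq_sym (h j)) //.
  by move=> q qhi; rewrite eq_sym (negbTE qhi) mul0r.
rewrite Eu_sum (eq_bigr (fun _ => m%:R^-1 * m%:R^-1)); last first.
  by move=> q _; rewrite (@Eu_ffun_coord2 _ _ _ i j (fun y => (y == q)%:R) (fun y => (y == q)%:R)) // !Eu_bucket.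
have m0 : m%:R != 0 :> R by rewrite pnatr_eq0 -lt0n.
by rewrite sumr_const card_ord -[_ *+ m]mulr_natr; field.
Qed.

Lemma Eu_vw_inner a b :
  Eu (fun h => Eu (fun s => vw_inner a b h s)) = \sum_i a i * b i.
Proof.
rewrite (@eq_Eu _ _ _ (fun=> \sum_i a i * b i)) ?Eu_cst ?card_hash_gt0 // => h.
rewrite (eq_Eu (vw_inner_sgn_form a b h)) Eu_sgn_form.
by apply: eq_bigr => i _; rewrite eqxx mulr1.
Qed.

Lemma Eu_vw_inner_sq a b :
  Eu (fun h => Eu (fun s => vw_inner a b h s ^+ 2)) =
  (\sum_i a i * b i) ^+ 2
  + m%:R^-1 * \sum_i \sum_j (i != j)%:R * (a i ^+ 2 * b j ^+ 2 + a i * b i * (a j * b j)).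
Proof.
rewrite (@eq_Eu _ _ _ (fun h => (\sum_i a i * b i) ^+ 2 + \sum_i \sum_j
   ((i != j)%:R * (a i ^+ 2 * b j ^+ 2 + a i * b i * (a j * b j))) * (h i == h j)%:R)).
  rewrite Eu_add Eu_cst ?card_hash_gt0 // Eu_sum mulr_sumr; congr (_ + _).
  apply: eq_bigr => i _; rewrite Eu_sum mulr_sumr; apply: eq_bigr => j _.
  rewrite Eu_scale; have [<-|ij] := eqVneq i j; first by rewrite !mul0r mulr0.
  by rewrite Eu_hash_collision //; ring.
move=> h; rewrite (@eq_Eu _ _ _ (fun s => (\sum_i \sum_j
  (a i * b j * (h i == h j)%:R) * (sgn R (s i) * sgn R (s j))) ^+ 2)); last first.
  by move=> s; rewrite vw_inner_sgn_form.
rewrite Eu_sgn_form_sq; congr (_ ^+ 2 + _).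
  by apply: eq_bigr => i _; rewrite eqxx mulr1.
apply: eq_bigr => i _; apply: eq_bigr => j _.
by rewrite (eq_sym (h j)); case: (h i == h j) => /=; ring.
Qed.

Lemma Eu_vw_inner_sq_indicator a b :
  (forall i, a i * a i = a i) -> (forall i, b i * b i = b i) ->
  Eu (fun h => Eu (fun s => vw_inner a b h s ^+ 2)) =
  (\sum_i a i * b i) ^+ 2 + m%:R^-1 *
    ((\sum_i a i) * (\sum_i b i) + (\sum_i a i * b i) ^+ 2 - 2 * \sum_i a i * b i).
Proof.
move=> a01 b01; rewrite Eu_vw_inner_sq sumr_offdiag; congr (_ + _ * _).
have ab01 i : a i * b i * (a i * b i) = a i * b i by rewrite mulrACA a01 b01.
have -> : \sum_i (a i ^+ 2 * b i ^+ 2 + a i * b i * (a i * b i)) = 2 * \sum_i a i * b i.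
  by rewrite mulr_sumr; apply: eq_bigr => i _; rewrite !expr2 a01 b01 ab01; ring.
congr (_ - _); rewrite expr2 !mulr_suml -big_split; apply: eq_bigr => i _.
by rewrite !mulr_sumr -big_split; apply: eq_bigr => j _; rewrite !expr2 a01 b01.
Qed.

End VWHashing.

Section ExpandedVectors.
Variables (R : realFieldType) (D b k : nat).
Variable pis : {ffun 'I_k -> {perm 'I_D}}.
Local Notation N := (2 ^ b * k)%N.

Definition bbit_match (S1 S2 : {set 'I_D}) (p : {perm 'I_D}) : R :=
  (lowbits b (minperm p S1) == lowbits b (minperm p S2))%:R.

Lemma lowbits_lt v : (lowbits b v < 2 ^ b)%N.
Proof. by rewrite ltn_pmod // expn_gt0. Qed.

Lemma block_pos_subproof (S : {set 'I_D}) (j : 'I_k) :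
  (j * 2 ^ b + lowbits b (minperm (pis j) S) < N)%N.
Proof.
have := lowbits_lt (minperm (pis j) S); have := ltn_ord j.
move: (lowbits _ _) (2 ^ b)%N (nat_of_ord j) => x p i; nia.
Qed.

Definition block_pos (S : {set 'I_D}) (j : 'I_k) : 'I_N :=
  Ordinal (block_pos_subproof S j).

Lemma block_pos_eq S S' j j' : (block_pos S j == block_pos S' j') =
  (j == j') && (lowbits b (minperm (pis j) S) == lowbits b (minperm (pis j') S')).
Proof.
have div_pos S0 j0 : (block_pos S0 j0 %/ 2 ^ b)%N = j0.
  by rewrite /= divnMDl ?expn_gt0 // divn_small ?addn0 // lowbits_lt.
apply/eqP/andP => [e|[/eqP <- /eqP e]]; last by apply: val_inj; rewrite /= e.
have jj' : j = j' by apply: val_inj; rewrite /= -(div_pos S j) e div_pos.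
by split; [rewrite jj'| move: e; rewrite jj' => /(congr1 val)/eqP; rewrite eqn_add2l].
Qed.

Lemma xvec_blocks S (i : 'I_N) : xvec R pis S i = \sum_j (block_pos S j == i)%:R.
Proof.
rewrite /xvec; case: existsP => [[j0 /eqP ij0]|noj]; last first.
  by rewrite big1 // => j _; case: eqP => // ij; case: noj; exists j; rewrite -ij.
have -> : i = block_pos S j0 by apply: val_inj.
rewrite (bigD1 j0) //= eqxx big1 ?addr0 // => j jj0.
by rewrite block_pos_eq (negbTE jj0).
Qed.

Lemma xvec_idem S (i : 'I_N) : xvec R pis S i * xvec R pis S i = xvec R pis S i.
Proof. by rewrite /xvec; case: [exists _, _]; rewrite ?mulr1 ?mulr0. Qed.

Lemma sum_xvec S : \sum_(i < N) xvec R pis S i = k%:R.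
Proof.
rewrite (eq_bigr _ (fun i _ => xvec_blocks S i)) exchange_big /=.
rewrite (eq_bigr (fun _ => 1)) ?sumr_const ?card_ord // => j _.
by rewrite -[RHS](sumr_delta (block_pos S j) (fun=> 1)); apply: eq_bigr => i _; rewrite mulr1.
Qed.

Lemma dot_xvec S1 S2 :
  \sum_(i < N) xvec R pis S1 i * xvec R pis S2 i = \sum_j bbit_match S1 S2 (pis j).
Proof.
rewrite (eq_bigr (fun i : 'I_N => \sum_j \sum_j'
   (block_pos S1 j == i)%:R * (i == block_pos S2 j')%:R)); last first.
  move=> i _; rewrite !xvec_blocks mulr_suml; apply: eq_bigr => j _.
  by rewrite mulr_sumr; apply: eq_bigr => j' _; rewrite (eq_sym i).
rewrite exchange_big; apply: eq_bigr => j _ /=.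
rewrite exchange_big -[RHS](sumr_delta j (fun j' => bbit_match S1 S2 (pis j'))).
apply: eq_bigr => j' _ /=; rewrite sumr_delta block_pos_eq.
by case: eqP => [<-|_]; rewrite ?mul0r ?mul1r.
Qed.

End ExpandedVectors.

Section IndependentTrials.
Variables (R : realFieldType) (J : finType) (k : nat) (Y : J -> R).
Hypothesis J_gt0 : (0 < #|J|)%N.
Hypothesis Y01 : forall p, Y p * Y p = Y p.

Lemma Eu_sum_trials :
  Eu (fun pis : {ffun 'I_k -> J} => \sum_j Y (pis j)) = k%:R * Eu Y.
Proof.
rewrite Eu_sum (eq_bigr (fun _ => Eu Y)) ?sumr_const ?card_ord ?mulr_natl //.
by move=> j _; rewrite Eu_ffun_coord.
Qed.

Lemma Eu_sum_trials_sq :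
  Eu (fun pis : {ffun 'I_k -> J} => (\sum_j Y (pis j)) ^+ 2)
  = k%:R * Eu Y + (k%:R ^+ 2 - k%:R) * Eu Y ^+ 2.
Proof.
have pair_mean (j j' : 'I_k) :
    Eu (fun pis : {ffun 'I_k -> J} => Y (pis j) * Y (pis j'))
    = Eu Y ^+ 2 + (j == j')%:R * (Eu Y - Eu Y ^+ 2).
  have [<-|jj'] := eqVneq j j'; last by rewrite Eu_ffun_coord2 // mul0r addr0.
  by rewrite (@eq_Eu _ _ _ (fun pis : {ffun 'I_k -> J} => Y (pis j)))
    ?Eu_ffun_coord // mul1r addrC subrK.
rewrite (@eq_Eu _ _ _ (fun pis : {ffun 'I_k -> J} => \sum_j \sum_j' Y (pis j) * Y (pis j'))); last first.
  by move=> pis; rewrite expr2 mulr_suml; apply: eq_bigr => j _; rewrite mulr_sumr.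
rewrite Eu_sum (eq_bigr (fun _ => k%:R * Eu Y ^+ 2 + (Eu Y - Eu Y ^+ 2))); last first.
  move=> j _; rewrite Eu_sum (eq_bigr _ (fun j' _ => pair_mean j j')) big_split /=.
  by rewrite sumr_delta sumr_const card_ord mulr_natl.
by rewrite sumr_const card_ord -mulr_natl; ring.
Qed.

End IndependentTrials.

Section BbitVW.
Variables (R : realFieldType) (D b k m : nat) (S1 S2 : {set 'I_D}).
Hypothesis m_gt0 : (0 < m)%N.
Local Notation P := (Pb R b S1 S2).

Lemma card_perm_gt0 : (0 < #|{perm 'I_D}|)%N.
Proof. by apply/card_gt0P; exists 1%g. Qed.

Lemma Eu_Omega (F : Omega D b k m -> R) : Eu F =
  Eu (fun pis => Eu (fun h => Eu (fun s => F ((pis, h), s)))).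
Proof. by rewrite !Eu_pair. Qed.

Lemma Eu_That : Eu (That R S1 S2 : Omega D b k m -> R) = k%:R * P.
Proof.
rewrite Eu_Omega -Eu_sum_trials ?card_perm_gt0 //; apply: eq_Eu => pis.
by rewrite -(dot_xvec R) -(Eu_vw_inner m_gt0).
Qed.

(* [ET2] is the second moment of the Binomial(k, P) count [T = <x1, x2>]. *)
Lemma Eu_That_sq : let ET2 := k%:R * P + (k%:R ^+ 2 - k%:R) * P ^+ 2 in
  Eu (fun w : Omega D b k m => That R S1 S2 w ^+ 2)
  = ET2 + m%:R^-1 * (k%:R ^+ 2 + ET2 - 2 * (k%:R * P)).
Proof.
pose Y := bbit_match R b S1 S2.
have Y01 p : Y p * Y p = Y p by rewrite /Y /bbit_match; case: (_ == _); rewrite ?mulr1 ?mulr0.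
pose T (pis : {ffun 'I_k -> {perm 'I_D}}) := \sum_j Y (pis j).
rewrite /= Eu_Omega (@eq_Eu _ _ _ (fun pis =>
  (1 + m%:R^-1) * T pis ^+ 2 + (- (2 * m%:R^-1)) * T pis + m%:R^-1 * k%:R ^+ 2)).
  rewrite !Eu_add Eu_cst ?card_ffun ?expn_gt0 ?card_perm_gt0 // !Eu_scale.
  by rewrite Eu_sum_trials_sq ?Eu_sum_trials ?card_perm_gt0 // (_ : Eu Y = P) //; ring.
move=> pis; transitivity (Eu (fun h : {ffun 'I_(2 ^ b * k) -> 'I_m} => Eu (fun s =>
  vw_inner (@xvec R D b k pis S1) (@xvec R D b k pis S2) h s ^+ 2))); first by [].
rewrite Eu_vw_inner_sq_indicator //; [|exact: xvec_idem..].
by rewrite !sum_xvec dot_xvec /T /Y; ring.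
Qed.

End BbitVW.

Theorem lemma2 (R : realFieldType) (D b k m : nat) (S1 S2 : {set 'I_D})
  (hS1 : S1 != set0) (hS2 : S2 != set0)
  (hb : (1 <= b)%N) (hk : (1 <= k)%N) (hm : (1 <= m)%N)
  (hC2 : C2b b (#|S1|%:R / D%:R : R) (#|S2|%:R / D%:R) != 1)
  (hPb : Pb R b S1 S2 =
         C1b b (#|S1|%:R / D%:R) (#|S2|%:R / D%:R)
         + (1 - C2b b (#|S1|%:R / D%:R) (#|S2|%:R / D%:R)) * resemblance R S1 S2) :
  let r1 : R := #|S1|%:R / D%:R in
  let r2 : R := #|S2|%:R / D%:R in
  let P := Pb R b S1 S2 in
  let C2 := C2b b r1 r2 in
  Eu (@Rhat_vw R D b k m S1 S2) = resemblance R S1 S2 /\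
  Varu (@Rhat_vw R D b k m S1 S2) =
    k%:R^-1 * (P * (1 - P) / (1 - C2) ^+ 2)
    + m%:R^-1 * ((1 - C2) ^+ 2)^-1 * (1 + P ^+ 2 - P * (1 + P) / k%:R).
Proof.
move=> r1 r2 P C2; set C1 := C1b b r1 r2.
have k0 : k%:R != 0 :> R by rewrite pnatr_eq0 -lt0n.
have m0 : m%:R != 0 :> R by rewrite pnatr_eq0 -lt0n.
have C2_neq1 : 1 - C2 != 0 by rewrite subr_eq0 eq_sym.
have Omega_gt0 : (0 < #|Omega D b k m|)%N.
  by apply/card_gt0P; exists (([ffun=> 1%g], [ffun=> Ordinal hm]), [ffun=> false]).
have Rhat_affine : @Rhat_vw R D b k m S1 S2 =1
    (fun w => (k%:R * (1 - C2))^-1 * That R S1 S2 w + - C1 / (1 - C2)).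
  by move=> w; rewrite /Rhat_vw -/r1 -/r2 -/C2 -/C1; field; rewrite k0 C2_neq1.
split.
  rewrite (eq_Eu Rhat_affine) Eu_affine // Eu_That // hPb -/r1 -/r2 -/C1 -/C2.
  by field; rewrite k0 C2_neq1.
rewrite (eq_Varu Rhat_affine) Varu_affine // Eu_That_sq // Eu_That // -/P.
by field; rewrite k0 C2_neq1 m0.
Qed.
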